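(* Let $\{a_n\}_{n\ge1}$ be the off-diagonal parameters of Example 5.1 (with $b_n=0$), and set $a_0=1$. For $x_0\in(-1,1)$ and $\theta_0\in\mathbb{R}$ let $u_n=u_n(x_0,\theta_0)$, $n\ge0$, be the solution of $a_nu_{n+1}-x_0u_n+a_{n-1}u_{n-1}=0$ ($n\ge1$) with $u_0=\cos\theta_0$, $u_1=\sin\theta_0$. Then for every compact $K\subset(-1,1)$ there is $C<\infty$ such that $|u_n(x_0,\theta_0)|\le C$ for all $x_0\in K$, all $\theta_0\in\mathbb{R}$ and all $n\ge0$.
   Context: Example 5.1: partition $\{1,2,\dots\}$ into successive consecutive blocks $A_1,B_1,C_1,D_1,A_2,B_2,\dots$ with $\#A_j=3^{j^2}$, $\#C_j=2^{j^2}$, $\#B_j=\#D_j=j^6-1$. $a_n=1$ for $n\in A_j$, $a_n=\tfrac12$ for $n\in C_j$; if $s$ is the last index of $A_j$ then $a_{s+i}=2^{-i/j^6}$ for $1\le i\le j^6-1$ (indices of $B_j$), and if $t$ is the last index of $C_j$ then $a_{t+i}=2^{-1+i/j^6}$ for $1\le i\le j^6-1$ (indices of $D_j$). *)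

From Stdlib Require Import Reals Arith.
Open Scope R_scope.

Definition sizeA (j : nat) : nat := 3 ^ (j * j).
Definition sizeB (j : nat) : nat := j ^ 6 - 1.
Definition sizeC (j : nat) : nat := 2 ^ (j * j).
Definition sizeD (j : nat) : nat := j ^ 6 - 1.
Definition blockLen (j : nat) : nat := sizeA j + sizeB j + sizeC j + sizeD j.

(* a_aux fuel j m : value of the parameter at 0-based offset m counted from
   the first index of A_j (blocks A_j,B_j,C_j,D_j,A_{j+1},...).
   The fuel is always sufficient when fuel > m since every group is
   nonempty. *)
Fixpoint a_aux (fuel j m : nat) : R :=
  match fuel with
  | O => 1
  | S f =>
    if Nat.ltb m (sizeA j) then 1
    else let m1 := (m - sizeA j)%nat in
    if Nat.ltb m1 (sizeB j) then
      (* index s+i with i = m1+1 : a = 2^{-i/j^6} *)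
      Rpower 2 (- (INR (S m1) / INR (j ^ 6)))
    else let m2 := (m1 - sizeB j)%nat in
    if Nat.ltb m2 (sizeC j) then 1 / 2
    else let m3 := (m2 - sizeC j)%nat in
    if Nat.ltb m3 (sizeD j) then
      (* index t+i with i = m3+1 : a = 2^{-1+i/j^6} *)
      Rpower 2 (-1 + INR (S m3) / INR (j ^ 6))
    else a_aux f (S j) (m3 - sizeD j)
  end.

Definition a_ex (n : nat) : R :=
  match n with
  | O => 1
  | S k => a_aux n 1 k
  end.

From Stdlib Require Import Reals Lra Lia.
Open Scope R_scope.

(** Write the recurrence a_n u_{n+1} - x u_n + a_{n-1} u_{n-1} = 0 in the
    phase-plane coordinates (p_n, q_n) = (a_n u_{n+1}, u_n).  One step is the
    linear map (p, q) -> (x p/a_n - a_n q, p/a_n), which preserves the quadratic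
    form p^2 - x p q + a_n^2 q^2; for |x| < 1 and a_n in [1/2, 1] this form is
    definite, and its square divided by the discriminant (the energy V_n) is
    comparable to |(p_n, q_n)|^4.  When the coefficients vary, V_n changes at
    first order in t_{n+1} = a_{n+1}^2 - a_n^2; adding the correction
    t_{n+1} R_n cancels this, and the corrected energy W_n changes by at most
    eps_{n+1} |(p,q)|^4 with eps_n = t_n^2 + |t_{n+1} - t_n|.  Hence, if the
    eps_n have small tails, V_n stays below 3 V_m after a suitable index m and
    the solutions are bounded uniformly in x^2 <= 1 - rho (uniform_boundedness). *)

(** Invariant form, energy and the correction term. *)

(* The quadratic form preserved by one transfer step with off-diagonal al = a^2. *)
Definition qform (al x p q : R) : R := p*p - x*p*q + al*q*q.

(* Its discriminant (up to a factor); positive exactly when the form is definite. *)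
Definition gap (al x : R) : R := al - x*x/4.

Definition energy (al x p q : R) : R := qform al x p q * qform al x p q / gap al x.

(* The correction term removing the first-order change of the energy. *)
Definition corr_factor (al x p q : R) : R := q*(x*p/2 - al*q).
Definition corr (al x p q : R) : R :=
  qform al x p q * corr_factor al x p q / (gap al x * gap al x).

(* The two remainders, of second order in the change of the coefficient. *)
Definition err_energy (al be x p q : R) : R :=
  (q*q - qform al x p q / gap al x)^2 / gap be x.
Definition err_corr (al be x p q : R) : R :=
  - qform al x p q * corr_factor al x p q * (gap al x + gap be x)
      / ((gap al x)^2 * (gap be x)^2)
  + (q*q*(corr_factor al x p q - qform al x p q) - (be - al)*q^4) / (gap be x)^2.

Lemma energy_step a be x p q : a <> 0 -> gap (a*a) x <> 0 -> gap be x <> 0 ->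
  let P := x*(p/a) - a*q in let q' := p/a in
  energy be x P q' - energy (a*a) x p q =
  (be - a*a)*(corr (a*a) x p q - corr (a*a) x P q')
  + (be - a*a)^2 * err_energy (a*a) be x P q'.
Proof.
  intros Ha Hgap Hgap' P q'; unfold P, q', energy, corr, err_energy, qform, corr_factor in *.
  unfold gap in *; field; repeat split; auto; intro; lra.
Qed.

Lemma corr_step al be x P q : gap al x <> 0 -> gap be x <> 0 ->
  corr be x P q - corr al x P q = (be - al) * err_corr al be x P q.
Proof.
  intros; unfold err_corr, corr, qform, corr_factor in *.
  unfold gap in *; field; repeat split; auto; intro; lra.
Qed.

Lemma Rabs_mul_le X Y A B : Rabs X <= A -> Rabs Y <= B -> Rabs (X*Y) <= A*B.
Proof. intros; rewrite Rabs_mult; apply Rmult_le_compat; auto using Rabs_pos. Qed.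

Lemma Rabs_add_le X Y A B : Rabs X <= A -> Rabs Y <= B -> Rabs (X+Y) <= A+B.
Proof. intros; eapply Rle_trans; [apply Rabs_triang | lra]. Qed.

Lemma Rabs_sub_le X Y A B : Rabs X <= A -> Rabs Y <= B -> Rabs (X-Y) <= A+B.
Proof. intros; apply Rabs_add_le; rewrite ?Rabs_Ropp; auto. Qed.

Lemma Rabs_bounds X B : Rabs X <= B -> -B <= X <= B.
Proof. unfold Rabs; destruct (Rcase_abs X); lra. Qed.

Lemma Rabs_nonneg_le X B : 0 <= X <= B -> Rabs X <= B.
Proof. intros; rewrite Rabs_right; lra. Qed.

Lemma cross_term_bound x p q : x*x <= 1 -> -((p*p+q*q)/2) <= x*p*q <= (p*p+q*q)/2.
Proof.
  intros Hx.
  pose proof (pow2_ge_0 (p-q)); pose proof (pow2_ge_0 (p+q)).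
  assert (-1 <= x <= 1) by (split; nra).
  assert (-((p*p+q*q)/2) <= p*q <= (p*p+q*q)/2) by (split; nra).
  destruct (Rle_dec 0 (p*q)); split; nra.
Qed.

Lemma qform_abs al x p q : 0 <= al <= 1 -> x*x <= 1 ->
  Rabs (qform al x p q) <= 2*(p*p+q*q).
Proof.
  intros Hal Hx; unfold qform; apply Rabs_le.
  pose proof (cross_term_bound x p q Hx); pose proof (pow2_ge_0 p); pose proof (pow2_ge_0 q).
  split; nra.
Qed.

Lemma corr_factor_abs al x p q : 0 <= al <= 1 -> x*x <= 1 ->
  Rabs (corr_factor al x p q) <= 2*(p*p+q*q).
Proof.
  intros Hal Hx; unfold corr_factor; apply Rabs_le.
  pose proof (cross_term_bound x p q Hx).
  replace (q * (x * p / 2 - al * q)) with (x*p*q/2 - al*(q*q)) by field.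
  assert (0 <= q*q) by apply Rle_0_sqr; assert (0 <= p*p) by apply Rle_0_sqr.
  assert (0 <= al*(q*q) <= q*q) by (split; nra).
  split; lra.
Qed.

Lemma qform_lower al x p q : 0 <= al <= 1 -> 0 < gap al x ->
  gap al x * (p*p+q*q) / 2 <= qform al x p q.
Proof.
  intros Hal Hgap; unfold qform, gap in *.
  assert ((1+al)*(p*p - x*p*q + al*q*q) - (al - x*x/4)*(p*p+q*q)
          = (p - x/2*q)^2 + (-x/2*p + al*q)^2) by field.
  assert (0 <= p*p - x*p*q + al*q*q).
  { assert (p*p - x*p*q + al*q*q = (p - x/2*q)^2 + (al - x*x/4)*(q*q)) by field.
    pose proof (pow2_ge_0 (p - x/2*q)); pose proof (pow2_ge_0 q); nra. }
  pose proof (pow2_ge_0 (p - x/2*q)); pose proof (pow2_ge_0 (-x/2*p + al*q)).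
  pose proof (pow2_ge_0 p); pose proof (pow2_ge_0 q).
  nra.
Qed.

Section Elliptic.
Variables rho x : R.
Hypothesis Hrho : 0 < rho <= 1.
Hypothesis Hx : x*x <= 1 - rho.

Lemma gap_bounds al : 1/4 <= al <= 1 -> rho/4 <= gap al x <= 1.
Proof. unfold gap; intros; pose proof (pow2_ge_0 x); split; nra. Qed.

Lemma inv_gap_bounds al : 1/4 <= al <= 1 -> 0 < / gap al x <= 4/rho.
Proof.
  intros Hal; pose proof (gap_bounds al Hal); split.
  - apply Rinv_0_lt_compat; lra.
  - replace (4/rho) with (/ (rho/4)) by (field; lra); apply Rinv_le_contravar; lra.
Qed.

Lemma four_over_rho : 4 <= 4/rho.
Proof. apply Rmult_le_reg_r with rho; [lra | field_simplify; lra]. Qed.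

Lemma energy_bounds al p q : 1/4 <= al <= 1 ->
  0 <= energy al x p q /\
  (p*p+q*q)*(p*p+q*q) <= 4*(4/rho)^2 * energy al x p q /\
  energy al x p q <= 4*(4/rho) * ((p*p+q*q)*(p*p+q*q)).
Proof.
  intros Hal; pose proof (gap_bounds al Hal) as D; pose proof (inv_gap_bounds al Hal) as I.
  pose proof (qform_lower al x p q ltac:(lra) ltac:(lra)) as QL.
  pose proof (Rabs_bounds _ _ (qform_abs al x p q ltac:(lra) ltac:(lra))) as QA.
  set (r := p*p+q*q) in *; set (Q := qform al x p q) in *.
  assert (0 <= r) by (unfold r; pose proof (pow2_ge_0 p); pose proof (pow2_ge_0 q); nra).
  unfold energy; fold Q; unfold Rdiv; set (i := / gap al x) in *.
  assert (rho/8 * r <= Q) by nra.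
  assert (Q*Q <= 4*(r*r)) by nra.
  assert (rho/8*r*(rho/8*r) <= Q*Q) by (apply Rmult_le_compat; nra).
  assert (1 <= i) by (unfold i; rewrite <- Rinv_1; apply Rinv_le_contravar; lra).
  assert (Q*Q <= Q*Q*i) by nra.
  split; [nra | split].
  - assert (E : 4*(4/rho)^2 * (rho/8*r*(rho/8*r)) = r*r) by (field; lra).
    rewrite <- E; apply Rmult_le_compat_l; [apply Rmult_le_pos; [lra | apply pow2_ge_0] | lra].
  - assert (Q*Q*i <= 4*(r*r)*(4/rho)) by (apply Rmult_le_compat; nra); nra.
Qed.

Lemma corr_abs al p q : 1/4 <= al <= 1 ->
  Rabs (corr al x p q) <= 25 * (4/rho)^4 * ((p*p+q*q)*(p*p+q*q)).
Proof.
  intros Hal; pose proof four_over_rho as Hk.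
  pose proof (inv_gap_bounds al Hal) as Hi; set (k := 4/rho) in *.
  pose proof (qform_abs al x p q ltac:(lra) ltac:(lra)) as HQ.
  pose proof (corr_factor_abs al x p q ltac:(lra) ltac:(lra)) as HT.
  set (r := p*p+q*q) in *.
  assert (0 <= r) by (unfold r; pose proof (pow2_ge_0 p); pose proof (pow2_ge_0 q); nra).
  unfold corr, Rdiv; rewrite Rinv_mult; set (ia := / gap al x) in *.
  assert (Rabs (qform al x p q * corr_factor al x p q * (ia * ia)) <= (2*r*(2*r))*(k*k)).
  { apply Rabs_mul_le; [apply Rabs_mul_le; auto | apply Rabs_mul_le; apply Rabs_nonneg_le; lra]. }
  assert (k*k <= k^4) by (assert (1 <= k*k) by nra; simpl; nra).
  nra.
Qed.

Lemma err_energy_abs al be p q : 1/4 <= al <= 1 -> 1/4 <= be <= 1 ->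
  Rabs (err_energy al be x p q) <= 9 * (4/rho)^4 * ((p*p+q*q)*(p*p+q*q)).
Proof.
  intros Hal Hbe; pose proof four_over_rho as Hk.
  pose proof (inv_gap_bounds al Hal) as Ha; pose proof (inv_gap_bounds be Hbe) as Hb.
  set (k := 4/rho) in *; set (r := p*p+q*q).
  assert (Hqq : 0 <= q*q <= r) by (unfold r; pose proof (pow2_ge_0 p); pose proof (pow2_ge_0 q); nra).
  pose proof (qform_abs al x p q ltac:(lra) ltac:(lra)) as HQ; fold r in HQ.
  assert (k*k*k <= k^4) by (assert (1 <= k) by lra; simpl; nra).
  unfold err_energy, Rdiv; set (ia := / gap al x) in *; set (ib := / gap be x) in *.
  assert (Rabs (q*q - qform al x p q * ia) <= 3*r*k).
  { assert (Rabs (qform al x p q * ia) <= 2*r*k)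
      by (apply Rabs_mul_le; [exact HQ | apply Rabs_nonneg_le; lra]).
    eapply Rle_trans; [apply Rabs_sub_le; [apply Rabs_nonneg_le; exact Hqq | eauto] | nra]. }
  assert (Rabs ((q*q - qform al x p q * ia)^2 * ib) <= (3*r*k*(3*r*k))*k).
  { apply Rabs_mul_le; [simpl; rewrite Rmult_1_r; apply Rabs_mul_le; auto
                      | apply Rabs_nonneg_le; lra]. }
  assert (0 <= r*r*k) by (apply Rmult_le_pos; nra).
  nra.
Qed.

Lemma err_corr_abs al be p q : 1/4 <= al <= 1 -> 1/4 <= be <= 1 ->
  Rabs (err_corr al be x p q) <= 16 * (4/rho)^4 * ((p*p+q*q)*(p*p+q*q)).
Proof.
  intros Hal Hbe; pose proof four_over_rho as Hk.
  pose proof (inv_gap_bounds al Hal) as Ha; pose proof (inv_gap_bounds be Hbe) as Hb.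
  pose proof (gap_bounds al Hal); pose proof (gap_bounds be Hbe).
  set (k := 4/rho) in *; set (r := p*p+q*q).
  assert (Hqq : 0 <= q*q <= r) by (unfold r; pose proof (pow2_ge_0 p); pose proof (pow2_ge_0 q); nra).
  pose proof (qform_abs al x p q ltac:(lra) ltac:(lra)) as HQ.
  pose proof (corr_factor_abs al x p q ltac:(lra) ltac:(lra)) as HT; fold r in HQ, HT.
  assert (k*k <= k^4) by (assert (1 <= k*k) by nra; simpl; nra).
  unfold err_corr, Rdiv; set (ia := / gap al x) in *; set (ib := / gap be x) in *.
  replace (/ (gap al x ^ 2 * gap be x ^ 2)) with (ia*ia*(ib*ib)) by (unfold ia, ib; field; lra).
  replace (/ gap be x ^ 2) with (ib*ib) by (unfold ib; field; lra).
  assert (Rabs (- qform al x p q * corr_factor al x p q * (gap al x + gap be x)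
                * (ia * ia * (ib * ib))) <= (2*r*(2*r)*2)*(k*k*(k*k))).
  { apply Rabs_mul_le; [apply Rabs_mul_le |].
    - rewrite Ropp_mult_distr_l_reverse, Rabs_Ropp; apply Rabs_mul_le; auto.
    - apply Rabs_nonneg_le; lra.
    - apply Rabs_mul_le; apply Rabs_mul_le; apply Rabs_nonneg_le; lra. }
  assert (Rabs ((q * q * (corr_factor al x p q - qform al x p q) - (be - al) * q ^ 4) * (ib * ib))
          <= (r*(4*r) + 1*(r*r))*(k*k)).
  { apply Rabs_mul_le; [apply Rabs_sub_le; apply Rabs_mul_le |].
    - apply Rabs_nonneg_le; lra.
    - eapply Rle_trans; [apply Rabs_sub_le; [exact HT | exact HQ] | lra].
    - apply Rabs_le; lra.
    - replace (q^4) with ((q*q)*(q*q)) by ring; apply Rabs_mul_le; apply Rabs_nonneg_le; lra.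
    - apply Rabs_mul_le; apply Rabs_nonneg_le; lra. }
  assert (0 <= r*r) by nra.
  eapply Rle_trans; [apply Rabs_add_le; eauto |].
  assert (k*k*(k*k) = k^4) by ring; nra.
Qed.

End Elliptic.

(** Slowly varying coefficients. *)

Fixpoint sum_from (f : nat -> R) (m N : nat) : R :=
  match N with O => 0 | S N' => sum_from f m N' + f (m + N')%nat end.

Definition sq_incr (a : nat -> R) (n : nat) : R := a n * a n - a (n-1)%nat * a (n-1)%nat.
Definition defect (a : nat -> R) (n : nat) : R :=
  (sq_incr a n)^2 + Rabs (sq_incr a (S n) - sq_incr a n).

Definition small_tails (a : nat -> R) : Prop :=
  forall tau, 0 < tau -> exists m, forall N, sum_from (defect a) (S m) N <= tau.

Lemma defect_nonneg a n : 0 <= defect a n.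
Proof. unfold defect; pose proof (pow2_ge_0 (sq_incr a n)); pose proof (Rabs_pos (sq_incr a (S n) - sq_incr a n)); lra. Qed.

Lemma sum_from_nonneg f m N : (forall n, 0 <= f n) -> 0 <= sum_from f m N.
Proof. intros H; induction N; simpl; [lra | pose proof (H (m+N)%nat); lra]. Qed.

Definition solves (a : nat -> R) (x : R) (u : nat -> R) : Prop :=
  forall n, (1 <= n)%nat -> a n * u (S n) - x * u n + a (n-1)%nat * u (n-1)%nat = 0.

Definition corr_const (rho : R) : R := 25 * (4/rho)^4.
Definition coer_const (rho : R) : R := 4 * (4/rho)^2.
(* How small the tail of the defects must be for the energy to stay under control. *)
Definition threshold (rho : R) : R := / (8 * corr_const rho * coer_const rho).

Lemma constants_pos rho : 0 < rho <= 1 ->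
  0 < corr_const rho /\ 0 < coer_const rho /\ 0 < threshold rho <= 1 /\
  threshold rho * (corr_const rho * coer_const rho) = 1/8.
Proof.
  intros Hrho; pose proof (four_over_rho rho Hrho) as Hk.
  unfold threshold, corr_const, coer_const; set (k := 4/rho) in *.
  assert (256 <= k^4) by (replace 256 with (4^4) by ring; apply pow_incr; lra).
  assert (16 <= k^2) by (replace 16 with (4^2) by ring; apply pow_incr; lra).
  repeat split; try nra.
  - apply Rinv_0_lt_compat; nra.
  - rewrite <- Rinv_1; apply Rinv_le_contravar; nra.
  - field; nra.
Qed.

Definition sol_bound (rho : R) (m : nat) : R :=
  2 + (1 + 12 * coer_const rho * (4/rho)) * 144^m.

Section Solution.
Variables (a : nat -> R) (rho x : R) (u : nat -> R).
Hypothesis Hrho : 0 < rho <= 1.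
Hypothesis Ha : forall n, 1/2 <= a n <= 1.
Hypothesis Hx : x*x <= 1 - rho.
Hypothesis Hsol : solves a x u.

Definition pcoord (n : nat) : R := a n * u (S n).
Definition asq (n : nat) : R := a n * a n.
Definition norm2 (n : nat) : R := pcoord n * pcoord n + u n * u n.
Definition V (n : nat) : R := energy (asq n) x (pcoord n) (u n).
Definition W (n : nat) : R := V n + sq_incr a (S n) * corr (asq n) x (pcoord n) (u n).

Lemma asq_bounds n : 1/4 <= asq n <= 1.
Proof. unfold asq; specialize (Ha n); split; nra. Qed.

Lemma norm2_nonneg n : 0 <= norm2 n.
Proof. unfold norm2; pose proof (pow2_ge_0 (pcoord n)); pose proof (pow2_ge_0 (u n)); nra. Qed.

Lemma sq_incr_succ n : sq_incr a (S n) = asq (S n) - asq n.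
Proof. unfold sq_incr, asq; replace (S n - 1)%nat with n by lia; ring. Qed.

Lemma transfer n :
  u (S n) = pcoord n / a n /\ pcoord (S n) = x * (pcoord n / a n) - a n * u n.
Proof.
  assert (a n <> 0) by (specialize (Ha n); lra).
  unfold pcoord; split; [field; auto |].
  replace (a n * u (S n) / a n) with (u (S n)) by (field; auto).
  specialize (Hsol (S n) ltac:(lia)); replace (S n - 1)%nat with n in Hsol by lia; lra.
Qed.

Lemma norm2_step n : norm2 (S n) <= 12 * norm2 n.
Proof.
  destruct (transfer n) as [E1 E2]; unfold norm2; rewrite E1, E2.
  assert (a n <> 0) by (specialize (Ha n); lra).
  set (s := pcoord n / a n); assert (pcoord n = a n * s) by (unfold s; field; auto).
  rewrite H0; specialize (Ha n); set (an := a n) in *; set (w := u n).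
  assert (1/4 <= an*an <= 1) by (split; nra).
  assert (s*s <= 4*(an*s*(an*s))) by (pose proof (pow2_ge_0 s); nra).
  pose proof (pow2_ge_0 (x*s + an*w)); pose proof (pow2_ge_0 (x*s - an*w)).
  pose proof (pow2_ge_0 w); pose proof (pow2_ge_0 s).
  assert (x*s*(x*s) <= s*s) by nra.
  assert (an*w*(an*w) <= w*w) by nra.
  nra.
Qed.

Lemma V_bounds n :
  0 <= V n /\ norm2 n * norm2 n <= coer_const rho * V n /\
  V n <= 4*(4/rho) * (norm2 n * norm2 n).
Proof. apply energy_bounds; auto using asq_bounds. Qed.

Lemma W_close_to_V n :
  Rabs (W n - V n) <= Rabs (sq_incr a (S n)) * corr_const rho * (norm2 n * norm2 n).
Proof.
  unfold W; replace (V n + _ - V n) with (sq_incr a (S n) * corr (asq n) x (pcoord n) (u n)) by ring.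
  unfold corr_const; rewrite Rmult_assoc; apply Rabs_mul_le; [lra |].
  apply corr_abs; auto using asq_bounds.
Qed.

(* Key estimate: the corrected energy changes by at most the defect times the
   squared energy scale, since its first-order change cancels. *)
Lemma W_step n :
  Rabs (W (S n) - W n) <= defect a (S n) * corr_const rho * (norm2 (S n) * norm2 (S n)).
Proof.
  assert (Han : a n <> 0) by (specialize (Ha n); lra).
  destruct (transfer n) as [E1 E2].
  pose proof (gap_bounds rho x Hx (asq n) (asq_bounds n)) as Gn.
  pose proof (gap_bounds rho x Hx (asq (S n)) (asq_bounds (S n))) as GSn.
  pose proof (energy_step (a n) (asq (S n)) x (pcoord n) (u n) Han
                ltac:(unfold asq in *; lra) ltac:(lra)) as ES.
  cbv zeta in ES; rewrite <- E2, <- E1 in ES.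
  pose proof (corr_step (asq n) (asq (S n)) x (pcoord (S n)) (u (S n)) ltac:(lra) ltac:(lra)) as CS.
  set (P := pcoord (S n)) in *; set (Q := u (S n)) in *.
  assert (Heq : W (S n) - W n =
     sq_incr a (S n) ^2 * (err_energy (asq n) (asq (S n)) x P Q + err_corr (asq n) (asq (S n)) x P Q)
     + (sq_incr a (S (S n)) - sq_incr a (S n)) * corr (asq (S n)) x P Q).
  { change (a n * a n) with (asq n) in ES.
    unfold W, V; fold P Q; rewrite !sq_incr_succ.
    replace (energy (asq (S n)) x P Q) with (energy (asq n) x (pcoord n) (u n) +
      ((asq (S n) - asq n) * (corr (asq n) x (pcoord n) (u n) - corr (asq n) x P Q) +
       (asq (S n) - asq n) ^ 2 * err_energy (asq n) (asq (S n)) x P Q)) by lra.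
    replace (corr (asq (S n)) x P Q) with
      (corr (asq n) x P Q + (asq (S n) - asq n) * err_corr (asq n) (asq (S n)) x P Q) by lra.
    ring. }
  rewrite Heq; unfold defect, corr_const.
  pose proof (err_energy_abs rho x Hrho Hx (asq n) (asq (S n)) P Q (asq_bounds n) (asq_bounds (S n))).
  pose proof (err_corr_abs rho x Hrho Hx (asq n) (asq (S n)) P Q (asq_bounds n) (asq_bounds (S n))).
  pose proof (corr_abs rho x Hrho Hx (asq (S n)) P Q (asq_bounds (S n))).
  unfold norm2; fold P Q; set (r := P*P+Q*Q) in *.
  eapply Rle_trans; [apply Rabs_add_le; apply Rabs_mul_le |].
  - apply Rabs_nonneg_le; split; [apply pow2_ge_0 | apply Rle_refl].
  - eapply Rle_trans; [apply Rabs_add_le; eassumption | apply Rle_refl].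
  - apply Rle_refl.
  - eassumption.
  - nra.
Qed.

Variable m : nat.
Hypothesis Htail : forall N, sum_from (defect a) (S m) N <= threshold rho * threshold rho.

Lemma defect_small k : defect a (S (m+k)) <= threshold rho * threshold rho.
Proof.
  pose proof (Htail (S k)) as H; simpl in H.
  pose proof (sum_from_nonneg (defect a) (S m) k (defect_nonneg a)); lra.
Qed.

Lemma sq_incr_small k : Rabs (sq_incr a (S (m+k))) <= threshold rho.
Proof.
  pose proof (defect_small k) as H; unfold defect in H.
  pose proof (Rabs_pos (sq_incr a (S (S (m + k))) - sq_incr a (S (m + k)))).
  destruct (constants_pos rho Hrho) as (_ & _ & Hkap & _).
  apply Rabs_le; simpl in H; split; nra.
Qed.

Lemma W_near_V k : Rabs (W (m+k) - V (m+k)) <= V (m+k) / 8.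
Proof.
  destruct (constants_pos rho Hrho) as (HK & HL & Hkap & HkKL).
  destruct (V_bounds (m+k)) as (V0 & VL & _).
  pose proof (norm2_nonneg (m+k)).
  eapply Rle_trans; [apply W_close_to_V |].
  pose proof (sq_incr_small k) as T.
  apply Rle_trans with (threshold rho * corr_const rho * (coer_const rho * V (m+k))).
  - apply Rmult_le_compat; [apply Rmult_le_pos; [apply Rabs_pos | lra] | nra
                           | apply Rmult_le_compat_r; lra | lra].
  - replace (threshold rho * corr_const rho * (coer_const rho * V (m+k)))
      with (threshold rho * (corr_const rho * coer_const rho) * V (m+k)) by ring.
    rewrite HkKL; lra.
Qed.

Lemma energy_invariant k :
  V (m+k) <= 3 * V m /\
  W (m+k) <= W m + 3 * (corr_const rho * coer_const rho) * V m * sum_from (defect a) (S m) k.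
Proof.
  destruct (constants_pos rho Hrho) as (HK & HL & Hkap & HkKL).
  induction k as [|k [IH1 IH2]].
  - rewrite Nat.add_0_r; simpl; destruct (V_bounds m); split; lra.
  - replace (m + S k)%nat with (S (m + k)) by lia.
    set (n := (m+k)%nat) in *.
    pose proof (Rabs_bounds _ _ (W_step n)) as WS.
    pose proof (Rabs_bounds _ _ (W_near_V (S k))) as WV'.
    pose proof (Rabs_bounds _ _ (W_near_V 0)) as WVm.
    replace (m + S k)%nat with (S n) in WV' by (unfold n; lia); rewrite Nat.add_0_r in WVm.
    destruct (V_bounds (S n)) as (V'0 & V'L & _); destruct (V_bounds m) as (Vm0 & _ & _).
    pose proof (Htail (S k)) as Sk1; simpl in Sk1; fold n in Sk1.
    pose proof (sum_from_nonneg (defect a) (S m) k (defect_nonneg a)) as Sk0.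
    pose proof (defect_nonneg a (S n)) as e0.
    pose proof (norm2_nonneg (S n)).
    set (Sk := sum_from (defect a) (S m) k) in *; set (e := defect a (S n)) in *.
    set (KL := corr_const rho * coer_const rho) in *.
    (* one step raises W by at most KL*e*V(n+1), and KL*(Sk+e) <= 1/8 *)
    assert (A3 : e * corr_const rho * (norm2 (S n) * norm2 (S n)) <= KL * e * V (S n)).
    { unfold KL; replace (corr_const rho * coer_const rho * e * V (S n))
        with (e * corr_const rho * (coer_const rho * V (S n))) by ring.
      apply Rmult_le_compat_l; [nra | lra]. }
    assert (XY : KL * e + KL * Sk <= 1/8).
    { assert (threshold rho * threshold rho <= threshold rho) by nra.
      assert (Sk + e <= threshold rho) by lra.
      replace (KL * e + KL * Sk) with (KL * (Sk + e)) by ring.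
      rewrite <- HkKL; fold KL; rewrite Rmult_comm; apply Rmult_le_compat_r; nra. }
    assert (HKL : 0 < KL) by (unfold KL; apply Rmult_lt_0_compat; lra).
    assert (0 <= KL * e) by (apply Rmult_le_pos; lra).
    assert (0 <= KL * Sk) by (apply Rmult_le_pos; lra).
    (* V(n+1) <= 8/7 W(n+1), W(n+1) <= 9/8 V m + KL*(Sk+e)*(V m + V(n+1)) *)
    assert (HV' : V (S n) <= 3 * V m).
    { destruct (Rle_dec (V (S n)) (3 * V m)) as [|Hgt]; auto.
      assert (0 < (7/8 - KL * e) * (V (S n) - 3 * V m)) by (apply Rmult_lt_0_compat; lra).
      assert (0 <= (12/8 - 3 * (KL * e + KL * Sk)) * V m) by (apply Rmult_le_pos; lra).
      nra. }
    split; auto.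
    simpl; fold n Sk e.
    assert (KL * e * V (S n) <= KL * e * (3 * V m)) by (apply Rmult_le_compat_l; lra).
    nra.
Qed.

(* Normalized initial data have unit norm, so the norm squared is at most 12^n. *)
Lemma norm2_geometric theta :
  a 0%nat = 1 -> u 0%nat = cos theta -> u 1%nat = sin theta -> forall n, norm2 n <= 12^n.
Proof.
  intros Ha0 H0 H1; induction n.
  - unfold norm2, pcoord; rewrite Ha0, H0, H1, pow_O.
    pose proof (sin2_cos2 theta); unfold Rsqr in *; lra.
  - pose proof (norm2_step n); rewrite <- tech_pow_Rmult; lra.
Qed.

(* Before m the a priori growth bound applies, after m the energy invariant. *)
Lemma solution_bound theta :
  a 0%nat = 1 -> u 0%nat = cos theta -> u 1%nat = sin theta ->
  forall n, Rabs (u n) <= sol_bound rho m.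
Proof.
  intros Ha0 H0 H1; pose proof (norm2_geometric theta Ha0 H0 H1) as Hgeo.
  assert (P144 : forall k, 12^k * 12^k = 144^k)
    by (intro k; rewrite <- Rpow_mult_distr; f_equal; lra).
  assert (Hk : 0 < 4/rho) by (apply Rdiv_lt_0_compat; lra).
  destruct (constants_pos rho Hrho) as (_ & HL & _ & _).
  pose proof (pow_le 144 m ltac:(lra)); pose proof (pow_le 12 m ltac:(lra)).
  intro n.
  assert (Hu : Rabs (u n) <= 1 + norm2 n).
  { unfold norm2; pose proof (pow2_ge_0 (pcoord n));
    unfold Rabs; destruct (Rcase_abs (u n)); nra. }
  unfold sol_bound; pose proof (norm2_nonneg n).
  destruct (Nat.le_gt_cases m n) as [Hmn | Hmn].
  - destruct (energy_invariant (n - m)) as [I1 _].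
    replace (m + (n - m))%nat with n in I1 by lia.
    destruct (V_bounds n) as (_ & VnL & _); destruct (V_bounds m) as (_ & _ & VmU).
    pose proof (Hgeo m); pose proof (norm2_nonneg m).
    assert (norm2 m * norm2 m <= 144^m) by (rewrite <- P144; apply Rmult_le_compat; lra).
    assert (norm2 n * norm2 n <= 12 * coer_const rho * (4/rho) * 144^m).
    { eapply Rle_trans; [exact VnL |].
      replace (12 * coer_const rho * (4/rho) * 144^m)
        with (coer_const rho * (3 * (4*(4/rho) * 144^m))) by ring.
      apply Rmult_le_compat_l; [lra |].
      eapply Rle_trans; [exact I1 |]; apply Rmult_le_compat_l; [lra |].
      eapply Rle_trans; [exact VmU |]; apply Rmult_le_compat_l; lra. }
    assert (0 <= 12 * coer_const rho * (4/rho) * 144^m) by (repeat apply Rmult_le_pos; lra).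
    nra.
  - pose proof (Hgeo n).
    assert (12^n <= 12^m) by (apply Rle_pow; [lra | lia]).
    assert (12^m <= 144^m) by (apply pow_incr; lra).
    assert (0 <= 12 * coer_const rho * (4/rho) * 144^m) by (repeat apply Rmult_le_pos; lra).
    nra.
Qed.

End Solution.

Theorem uniform_boundedness (a : nat -> R) (rho : R) :
  0 < rho <= 1 -> a 0%nat = 1 -> (forall n, 1/2 <= a n <= 1) -> small_tails a ->
  exists C, forall x theta u, x*x <= 1 - rho -> u 0%nat = cos theta -> u 1%nat = sin theta ->
    solves a x u -> forall n, Rabs (u n) <= C.
Proof.
  intros Hrho Ha0 Ha Htails.
  destruct (constants_pos rho Hrho) as (_ & _ & Hkap & _).
  destruct (Htails (threshold rho * threshold rho)) as [m Hm]; [nra |].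
  exists (sol_bound rho m); intros x theta u Hx H0 H1 Hsol.
  exact (solution_bound a rho x u Hrho Ha Hx Hsol m Hm theta Ha0 H0 H1).
Qed.

Lemma closed_avoids_point (X : R -> Prop) (c : R) : closed_set X -> ~ X c ->
  exists d, 0 < d <= 1 /\ forall y, X y -> d <= Rabs (y - c).
Proof.
  intros Hclosed Hc.
  destruct (Hclosed c Hc) as [delta Hdelta].
  exists (Rmin delta 1); split.
  - split; [apply Rmin_glb_lt; [apply cond_pos | lra] | apply Rmin_r].
  - intros y Hy; destruct (Rle_lt_dec delta (Rabs (y - c))) as [Hfar | Hnear].
    + pose proof (Rmin_l delta 1); lra.
    + exfalso; exact (Hdelta y Hnear Hy).
Qed.

Lemma compact_in_unit_interval (K : R -> Prop) : compact K -> (forall x, K x -> -1 < x < 1) ->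
  exists rho, 0 < rho <= 1 /\ forall x, K x -> x*x <= 1 - rho.
Proof.
  intros HK Hin; pose proof (compact_P2 K HK) as Hclosed.
  destruct (closed_avoids_point K 1 Hclosed) as [d1 [Hd1 Hfar1]].
  { intro H; specialize (Hin 1 H); lra. }
  destruct (closed_avoids_point K (-1) Hclosed) as [d2 [Hd2 Hfar2]].
  { intro H; specialize (Hin (-1) H); lra. }
  exists (Rmin d1 d2); split.
  - split; [apply Rmin_glb_lt; lra | pose proof (Rmin_l d1 d2); lra].
  - intros x Hx; specialize (Hin x Hx); specialize (Hfar1 x Hx); specialize (Hfar2 x Hx).
    pose proof (Rmin_l d1 d2); pose proof (Rmin_r d1 d2); set (d := Rmin d1 d2) in *.
    rewrite Rabs_left in Hfar1 by lra; rewrite Rabs_right in Hfar2 by lra.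
    assert (-(1 - d) <= x <= 1 - d) by lra.
    assert (0 < d <= 1) by (split; [apply Rmin_glb_lt |]; lra).
    nra.
Qed.

(** Locating an index of Example 5.1 inside its group of blocks. *)

Lemma a_aux_unfold f j m : a_aux (S f) j m =
    if Nat.ltb m (sizeA j) then 1
    else if Nat.ltb (m - sizeA j) (sizeB j) then
      Rpower 2 (- (INR (S (m - sizeA j)) / INR (j ^ 6)))
    else if Nat.ltb (m - sizeA j - sizeB j) (sizeC j) then 1 / 2
    else if Nat.ltb (m - sizeA j - sizeB j - sizeC j) (sizeD j) then
      Rpower 2 (-1 + INR (S (m - sizeA j - sizeB j - sizeC j)) / INR (j ^ 6))
    else a_aux f (S j) (m - sizeA j - sizeB j - sizeC j - sizeD j).
Proof. reflexivity. Qed.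

Lemma a_aux_skip_group f j m : a_aux (S f) j (blockLen j + m) = a_aux f (S j) m.
Proof.
  rewrite a_aux_unfold; unfold blockLen.
  destruct (Nat.ltb_spec (sizeA j + sizeB j + sizeC j + sizeD j + m) (sizeA j)); [lia |].
  destruct (Nat.ltb_spec (sizeA j + sizeB j + sizeC j + sizeD j + m - sizeA j) (sizeB j)); [lia |].
  destruct (Nat.ltb_spec (sizeA j + sizeB j + sizeC j + sizeD j + m - sizeA j - sizeB j)
              (sizeC j)); [lia |].
  destruct (Nat.ltb_spec (sizeA j + sizeB j + sizeC j + sizeD j + m - sizeA j - sizeB j - sizeC j)
              (sizeD j)); [lia |].
  f_equal; lia.
Qed.

Lemma a_aux_fuel f j m : (m < blockLen j)%nat -> a_aux (S f) j m = a_aux 1 j m.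
Proof.
  intros H; rewrite !a_aux_unfold; unfold blockLen in H.
  destruct (Nat.ltb_spec m (sizeA j)); auto.
  destruct (Nat.ltb_spec (m - sizeA j) (sizeB j)); auto.
  destruct (Nat.ltb_spec (m - sizeA j - sizeB j) (sizeC j)); auto.
  destruct (Nat.ltb_spec (m - sizeA j - sizeB j - sizeC j) (sizeD j)); auto; lia.
Qed.

(* The flat blocks are long enough to separate the four corners of a group. *)
Lemma sizeA_ge j : (1 <= j)%nat -> (3 <= sizeA j)%nat.
Proof.
  intros; unfold sizeA; replace (j*j)%nat with (S (j*j - 1)) by nia; simpl.
  pose proof (Nat.pow_nonzero 3 (j*j-1)); lia.
Qed.

Lemma sizeC_ge j : (1 <= j)%nat -> (2 <= sizeC j)%nat.
Proof.
  intros; unfold sizeC; replace (j*j)%nat with (S (j*j - 1)) by nia; simpl.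
  pose proof (Nat.pow_nonzero 2 (j*j-1)); lia.
Qed.

Lemma pow6_ge j : (1 <= j)%nat -> (1 <= j^6)%nat.
Proof. intros; pose proof (Nat.pow_nonzero j 6); lia. Qed.

Lemma blockLen_ge j : (1 <= j)%nat -> (1 <= blockLen j)%nat.
Proof. intros; pose proof (sizeA_ge j H); unfold blockLen; lia. Qed.

Fixpoint group_start (k : nat) : nat :=
  match k with O => O | S k' => (group_start k' + blockLen (S k'))%nat end.

Lemma group_start_ge k : (k <= group_start k)%nat.
Proof. induction k; simpl; [lia | pose proof (blockLen_ge (S k) ltac:(lia)); lia]. Qed.

Lemma a_aux_group_start k : forall m f, (group_start k + m < f)%nat ->
  a_aux f 1 (group_start k + m) = a_aux (f - k) (S k) m.
Proof.
  induction k; intros m f H.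
  - simpl; rewrite Nat.sub_0_r; reflexivity.
  - simpl group_start in *.
    replace (group_start k + blockLen (S k) + m)%nat
      with (group_start k + (blockLen (S k) + m))%nat by lia.
    rewrite IHk by lia; pose proof (group_start_ge k).
    replace (f - k)%nat with (S (f - S k)) by lia; apply a_aux_skip_group.
Qed.

Definition loc (j m : nat) : R := a_aux 1 j m.

Lemma a_ex_in_group k m : (m <= blockLen (S k) + 1)%nat ->
  a_ex (S (group_start k + m)) = loc (S k) m.
Proof.
  intros H; unfold a_ex, loc; rewrite a_aux_group_start by lia; pose proof (group_start_ge k).
  destruct (Nat.ltb_spec m (blockLen (S k))).
  - replace (S (group_start k + m) - k)%nat with (S (group_start k + m - k)) by lia.
    apply a_aux_fuel; auto.
  - pose proof (blockLen_ge (S k) ltac:(lia)).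
    replace m with (blockLen (S k) + (m - blockLen (S k)))%nat by lia.
    replace (S (group_start k + (blockLen (S k) + (m - blockLen (S k)))) - k)%nat
      with (S (S (group_start k + (blockLen (S k) + (m - blockLen (S k))) - k - 1))) by lia.
    rewrite a_aux_skip_group, a_aux_unfold.
    pose proof (sizeA_ge (S (S k)) ltac:(lia)).
    destruct (Nat.ltb_spec (m - blockLen (S k)) (sizeA (S (S k)))); [| lia].
    change 1%nat with (S 0); rewrite a_aux_skip_group; reflexivity.
Qed.

Lemma Rpower2_0 : Rpower 2 0 = 1.
Proof. apply Rpower_O; lra. Qed.

Lemma Rpower2_m1 : Rpower 2 (-1) = 1/2.
Proof. replace (-1) with (- (1)) by ring; rewrite Rpower_Ropp, Rpower_1 by lra; lra. Qed.

Section Group.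
Variable j : nat.
Hypothesis Hj : (1 <= j)%nat.
Let A := sizeA j. Let B := sizeB j. Let C := sizeC j. Let D := sizeD j.

Lemma loc_A m : (m < A)%nat -> loc j m = 1.
Proof. intros; unfold loc; rewrite a_aux_unfold; destruct (Nat.ltb_spec m (sizeA j)); auto; unfold A in *; lia. Qed.

Lemma loc_C m : (A + B <= m < A + B + C)%nat -> loc j m = 1/2.
Proof.
  intros; unfold loc, A, B, C in *; rewrite a_aux_unfold.
  destruct (Nat.ltb_spec m (sizeA j)); [lia |].
  destruct (Nat.ltb_spec (m - sizeA j) (sizeB j)); [lia |].
  destruct (Nat.ltb_spec (m - sizeA j - sizeB j) (sizeC j)); [auto | lia].
Qed.

Lemma loc_after m : (A + B + C + D <= m)%nat -> loc j m = 1.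
Proof.
  intros; unfold loc, A, B, C, D in *; rewrite a_aux_unfold.
  destruct (Nat.ltb_spec m (sizeA j)); [lia |].
  destruct (Nat.ltb_spec (m - sizeA j) (sizeB j)); [lia |].
  destruct (Nat.ltb_spec (m - sizeA j - sizeB j) (sizeC j)); [lia |].
  destruct (Nat.ltb_spec (m - sizeA j - sizeB j - sizeC j) (sizeD j)); [lia |]; reflexivity.
Qed.

Lemma pow6_pos : 0 < INR (j^6).
Proof. apply lt_0_INR; pose proof (pow6_ge j Hj); lia. Qed.

Lemma sizeB_succ : INR B + 1 = INR (j^6).
Proof.
  unfold B, sizeB; pose proof (pow6_ge j Hj); rewrite minus_INR by lia; change (INR 1) with 1; lra.
Qed.

Lemma sizeD_succ : INR D + 1 = INR (j^6).
Proof.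
  unfold D, sizeD; pose proof (pow6_ge j Hj); rewrite minus_INR by lia; change (INR 1) with 1; lra.
Qed.

Lemma loc_ramp_down m : (A - 1 <= m <= A + B)%nat ->
  loc j m = Rpower 2 (-(INR m + 1 - INR A) / INR (j^6)).
Proof.
  intros H; pose proof (sizeA_ge j Hj); fold A in H0; pose proof pow6_pos.
  destruct (Nat.eq_dec m (A-1)) as [-> |].
  { rewrite loc_A by lia; rewrite minus_INR by lia; change (INR 1) with 1.
    replace (-(INR A - 1 + 1 - INR A) / INR (j^6)) with 0 by (field; lra).
    rewrite Rpower2_0; auto. }
  destruct (Nat.eq_dec m (A+B)) as [-> |].
  { pose proof (sizeC_ge j Hj) as HC; fold C in HC; rewrite loc_C by lia; rewrite plus_INR.
    replace (-(INR A + INR B + 1 - INR A) / INR (j^6)) with (-1)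
      by (rewrite <- sizeB_succ; pose proof (pos_INR B); field; lra).
    rewrite Rpower2_m1; auto. }
  unfold loc, A, B in *; rewrite a_aux_unfold.
  destruct (Nat.ltb_spec m (sizeA j)); [lia |].
  destruct (Nat.ltb_spec (m - sizeA j) (sizeB j)); [| lia].
  f_equal; rewrite S_INR, minus_INR by lia; unfold Rdiv; ring.
Qed.

Lemma loc_ramp_up m : (A + B + C - 1 <= m <= A + B + C + D)%nat ->
  loc j m = Rpower 2 (-1 + (INR m + 1 - INR (A + B + C)) / INR (j^6)).
Proof.
  intros H; pose proof (sizeC_ge j Hj); fold C in H0; pose proof pow6_pos.
  destruct (Nat.eq_dec m (A+B+C-1)) as [-> |].
  { rewrite loc_C by lia; rewrite minus_INR by lia; change (INR 1) with 1.
    replace (-1 + (INR (A+B+C) - 1 + 1 - INR (A+B+C)) / INR (j^6)) with (-1) by (field; lra).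
    rewrite Rpower2_m1; auto. }
  destruct (Nat.eq_dec m (A+B+C+D)) as [-> |].
  { rewrite loc_after by lia; rewrite (plus_INR (A+B+C) D).
    replace (-1 + (INR (A+B+C) + INR D + 1 - INR (A+B+C)) / INR (j^6)) with 0
      by (rewrite <- sizeD_succ; pose proof (pos_INR D); field; lra).
    rewrite Rpower2_0; auto. }
  unfold loc, A, B, C, D in *; rewrite a_aux_unfold.
  destruct (Nat.ltb_spec m (sizeA j)); [lia |].
  destruct (Nat.ltb_spec (m - sizeA j) (sizeB j)); [lia |].
  destruct (Nat.ltb_spec (m - sizeA j - sizeB j) (sizeC j)); [lia |].
  destruct (Nat.ltb_spec (m - sizeA j - sizeB j - sizeC j) (sizeD j)); [| lia].
  f_equal; rewrite S_INR, !minus_INR, !plus_INR by lia; unfold Rdiv; ring.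
Qed.

End Group.

Lemma Rpower2_le_1 y : y <= 0 -> Rpower 2 y <= 1.
Proof. intros; rewrite <- Rpower2_0; apply Rle_Rpower; lra. Qed.

Lemma Rpower2_ge_half y : -1 <= y -> 1/2 <= Rpower 2 y.
Proof. intros; rewrite <- Rpower2_m1; apply Rle_Rpower; lra. Qed.

Lemma ramp_exponent_bounds j z : (1 <= j)%nat -> (1 <= z <= j^6)%nat ->
  0 <= INR z / INR (j^6) <= 1.
Proof.
  intros Hj Hz; pose proof (pow6_pos j Hj).
  assert (0 <= INR z <= INR (j^6)) by (split; [apply pos_INR | apply le_INR; lia]).
  split; [apply Rmult_le_pos; [lra | left; apply Rinv_0_lt_compat; lra] |].
  apply Rmult_le_reg_r with (INR (j^6)); [lra | field_simplify; lra].
Qed.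

Lemma a_aux_bounds f : forall j m, (1 <= j)%nat -> 1/2 <= a_aux f j m <= 1.
Proof.
  induction f; intros j m Hj; [simpl; lra |].
  rewrite a_aux_unfold.
  destruct (Nat.ltb_spec m (sizeA j)); [lra |].
  destruct (Nat.ltb_spec (m - sizeA j) (sizeB j)).
  { pose proof (ramp_exponent_bounds j (S (m - sizeA j)) Hj ltac:(unfold sizeB in *; lia)).
    split; [apply Rpower2_ge_half | apply Rpower2_le_1]; lra. }
  destruct (Nat.ltb_spec (m - sizeA j - sizeB j) (sizeC j)); [lra |].
  destruct (Nat.ltb_spec (m - sizeA j - sizeB j - sizeC j) (sizeD j)).
  { pose proof (ramp_exponent_bounds j (S (m - sizeA j - sizeB j - sizeC j)) Hj
                  ltac:(unfold sizeD in *; lia)).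
    split; [apply Rpower2_ge_half | apply Rpower2_le_1]; lra. }
  apply IHf; lia.
Qed.

Lemma a_ex_bounds n : 1/2 <= a_ex n <= 1.
Proof. destruct n; [simpl; lra | apply a_aux_bounds; lia]. Qed.

Definition prof (j m : nat) : R := loc j m * loc j m.
Definition ratio (j : nat) : R := Rpower 2 (-2 / INR (j^6)).
Definition eta (j : nat) : R := 1 - ratio j.

Lemma defect_loc j m : defect (loc j) m =
  (prof j m - prof j (m-1))^2 + Rabs ((prof j (S m) - prof j m) - (prof j m - prof j (m-1))).
Proof. unfold defect, sq_incr, prof; replace (S m - 1)%nat with m by lia; reflexivity. Qed.

Lemma prof_bounds j m : (1 <= j)%nat -> 1/4 <= prof j m <= 1.
Proof. intros; pose proof (a_aux_bounds 1 j m H); unfold prof, loc; split; nra. Qed.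

Lemma ratio_bounds j : (1 <= j)%nat -> 0 < ratio j <= 1.
Proof.
  intros; pose proof (pow6_pos j H); split; [apply exp_pos | apply Rpower2_le_1].
  assert (0 < 2 / INR (j^6)) by (apply Rdiv_lt_0_compat; lra); unfold Rdiv in *; lra.
Qed.

Lemma ln2_lt_1 : ln 2 < 1.
Proof.
  rewrite <- (ln_exp 1); apply ln_increasing; [lra |].
  pose proof (exp_ineq1 1 ltac:(lra)); lra.
Qed.

Lemma eta_bounds j : (1 <= j)%nat -> 0 <= eta j <= 2 / INR (j^6).
Proof.
  intros; pose proof (ratio_bounds j H); unfold eta; split; [lra |].
  pose proof (pow6_pos j H); unfold ratio, Rpower.
  assert (0 < 2 / INR (j^6)) by (apply Rdiv_lt_0_compat; lra).
  pose proof ln2_lt_1; pose proof ln_lt_2.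
  replace (-2 / INR (j ^ 6) * ln 2) with (- (2 / INR (j^6) * ln 2)) by (unfold Rdiv; ring).
  pose proof (exp_ineq1_le (- (2 / INR (j^6) * ln 2))).
  nra.
Qed.

Lemma Rpower2_sq y : Rpower 2 y * Rpower 2 y = Rpower 2 (2*y).
Proof. rewrite <- Rpower_plus; f_equal; ring. Qed.

Lemma geometric_defect y0 r : 0 <= y0 <= 1 -> 0 < r <= 1 ->
  (y0*r - y0)^2 + Rabs ((y0*r*r - y0*r) - (y0*r - y0)) <= 2*(1-r)^2 /\
  (y0*r - y0*r*r)^2 + Rabs ((y0 - y0*r) - (y0*r - y0*r*r)) <= 2*(1-r)^2.
Proof.
  intros.
  replace ((y0*r*r - y0*r) - (y0*r - y0)) with (y0*(1-r)^2) by ring.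
  replace ((y0 - y0*r) - (y0*r - y0*r*r)) with (y0*(1-r)^2) by ring.
  assert (0 <= y0*(1-r)^2) by (apply Rmult_le_pos; [lra | apply pow2_ge_0]).
  rewrite Rabs_right by lra.
  replace ((y0*r - y0)^2) with ((y0*y0)*(1-r)^2) by ring.
  replace ((y0*r - y0*r*r)^2) with ((y0*r*(y0*r))*(1-r)^2) by ring.
  pose proof (pow2_ge_0 (1-r)).
  assert (y0*y0 <= 1) by nra.
  assert (y0*r*(y0*r) <= 1) by (assert (0 <= y0*r <= 1) by (split; nra); nra).
  assert (y0*(1-r)^2 <= (1-r)^2) by nra.
  split; nra.
Qed.

Section GroupDefects.
Variable j : nat.
Hypothesis Hj : (1 <= j)%nat.
Let A := sizeA j. Let B := sizeB j. Let C := sizeC j. Let D := sizeD j.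

Lemma prof_ramp_down m : (A - 1 <= m)%nat -> (S m <= A + B)%nat ->
  prof j (S m) = prof j m * ratio j.
Proof.
  intros; unfold prof; rewrite !(loc_ramp_down j Hj) by (unfold A, B in *; lia).
  rewrite !Rpower2_sq; unfold ratio; rewrite <- Rpower_plus; f_equal.
  rewrite S_INR; pose proof (pow6_pos j Hj); field; lra.
Qed.

Lemma prof_ramp_up m : (A + B + C - 1 <= m)%nat -> (S m <= A + B + C + D)%nat ->
  prof j m = prof j (S m) * ratio j.
Proof.
  intros; unfold prof; rewrite !(loc_ramp_up j Hj) by (unfold A, B, C, D in *; lia).
  rewrite !Rpower2_sq; unfold ratio; rewrite <- Rpower_plus; f_equal.
  rewrite S_INR; pose proof (pow6_pos j Hj); field; lra.
Qed.

Lemma prof_one m : ((m < A) \/ (A + B + C + D <= m))%nat -> prof j m = 1.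
Proof. intros [H|H]; unfold prof; [rewrite loc_A | rewrite loc_after]; auto; ring. Qed.

Lemma prof_quarter m : (A + B <= m < A + B + C)%nat -> prof j m = 1/4.
Proof. intros; unfold prof; rewrite loc_C; auto; field. Qed.

Lemma prof_incr m : (1 <= m)%nat -> Rabs (prof j m - prof j (m-1)) <= eta j.
Proof.
  intros Hm; pose proof (sizeA_ge j Hj) as HA; pose proof (sizeC_ge j Hj) as HC.
  fold A in HA; fold C in HC.
  pose proof (eta_bounds j Hj); pose proof (ratio_bounds j Hj); unfold eta in *.
  set (p := (m-1)%nat); replace m with (S p) by (unfold p; lia).
  pose proof (prof_bounds j p Hj); pose proof (prof_bounds j (S p) Hj).
  destruct (Nat.lt_ge_cases (S p) A).
  { rewrite !prof_one by lia; rewrite Rminus_diag, Rabs_R0; lra. }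
  destruct (Nat.le_gt_cases (S p) (A+B)).
  { rewrite prof_ramp_down by lia; apply Rabs_le; split; nra. }
  destruct (Nat.lt_ge_cases (S p) (A+B+C)).
  { rewrite !prof_quarter by lia; rewrite Rminus_diag, Rabs_R0; lra. }
  destruct (Nat.le_gt_cases (S p) (A+B+C+D)).
  { rewrite (prof_ramp_up p) by lia; apply Rabs_le; split; nra. }
  rewrite !prof_one by lia; rewrite Rminus_diag, Rabs_R0; lra.
Qed.

(* Crude bound used at the four corners of the group. *)
Lemma defect_corner m : (1 <= m)%nat -> defect (loc j) m <= 3 * eta j.
Proof.
  intros; rewrite defect_loc.
  pose proof (Rabs_bounds _ _ (prof_incr m H)).
  pose proof (Rabs_bounds _ _ (prof_incr (S m) ltac:(lia))).
  replace (S m - 1)%nat with m in H1 by lia.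
  pose proof (eta_bounds j Hj); pose proof (ratio_bounds j Hj).
  assert (eta j <= 1) by (unfold eta; lra).
  assert (Rabs (prof j (S m) - prof j m - (prof j m - prof j (m - 1))) <= 2 * eta j)
    by (apply Rabs_le; split; lra).
  assert ((prof j m - prof j (m - 1))^2 <= eta j) by (simpl; nra).
  lra.
Qed.

Lemma defect_flat_A m : (1 <= m)%nat -> (S m < A)%nat -> defect (loc j) m = 0.
Proof. intros; rewrite defect_loc, !prof_one by lia; rewrite !Rminus_diag, Rabs_R0; ring. Qed.

Lemma defect_flat_C m : (A + B + 1 <= m)%nat -> (S m < A + B + C)%nat -> defect (loc j) m = 0.
Proof. intros; rewrite defect_loc, !prof_quarter by lia; rewrite !Rminus_diag, Rabs_R0; ring. Qed.

Lemma defect_ramp_B m : (A <= m)%nat -> (S m <= A + B)%nat -> defect (loc j) m <= 2 * (eta j)^2.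
Proof.
  intros; rewrite defect_loc; pose proof (ratio_bounds j Hj); unfold eta.
  pose proof (sizeA_ge j Hj) as HA; fold A in HA.
  rewrite (prof_ramp_down m) by lia.
  assert (Hm : prof j m = prof j (m-1) * ratio j)
    by (replace m with (S (m-1)) at 1 by lia; apply prof_ramp_down; lia).
  rewrite Hm.
  pose proof (prof_bounds j (m-1) Hj).
  destruct (geometric_defect (prof j (m-1)) (ratio j)) as [G _]; lra.
Qed.

Lemma defect_ramp_D m : (A + B + C <= m)%nat -> (S m <= A + B + C + D)%nat ->
  defect (loc j) m <= 2 * (eta j)^2.
Proof.
  intros; rewrite defect_loc; pose proof (ratio_bounds j Hj); unfold eta.
  pose proof (sizeA_ge j Hj) as HA; fold A in HA.
  assert (Hm : prof j (m-1) = prof j m * ratio j)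
    by (replace m with (S (m-1)) at 2 by lia; apply prof_ramp_up; lia).
  rewrite Hm.
  rewrite (prof_ramp_up m) by lia.
  pose proof (prof_bounds j (S m) Hj).
  destruct (geometric_defect (prof j (S m)) (ratio j)) as [_ G]; lra.
Qed.

End GroupDefects.

Lemma sum_from_app f m N1 N2 : sum_from f m (N1 + N2) = sum_from f m N1 + sum_from f (m + N1) N2.
Proof.
  induction N2; simpl; [rewrite Nat.add_0_r; ring |].
  rewrite Nat.add_succ_r; simpl; rewrite IHN2.
  replace (m + N1 + N2)%nat with (m + (N1 + N2))%nat by lia; ring.
Qed.

Lemma sum_from_le f m N c : (forall i, (i < N)%nat -> f (m+i)%nat <= c) -> sum_from f m N <= INR N * c.
Proof.
  induction N; intros H; [simpl; lra |].
  rewrite S_INR; simpl sum_from.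
  pose proof (H N ltac:(lia)).
  assert (sum_from f m N <= INR N * c) by (apply IHN; intros; apply H; lia); lra.
Qed.

Lemma sum_from_ext f g m m' N : (forall i, (i < N)%nat -> f (m+i)%nat = g (m'+i)%nat) ->
  sum_from f m N = sum_from g m' N.
Proof.
  induction N; intros H; simpl; auto.
  rewrite IHN by (intros; apply H; lia); rewrite H by lia; auto.
Qed.

Lemma sum_from_mono f m N N' : (forall n, 0 <= f n) -> (N <= N')%nat ->
  sum_from f m N <= sum_from f m N'.
Proof.
  intros; replace N' with (N + (N' - N))%nat by lia; rewrite sum_from_app.
  pose proof (sum_from_nonneg f (m+N) (N'-N) H); lra.
Qed.

(* Total defect of group j: the flat blocks contribute nothing, the four
   corners O(eta), the two ramps of length j^6 - 1 contribute O(j^6 eta^2). *)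
Lemma group_defect_sum j : (1 <= j)%nat -> sum_from (defect (loc j)) 1 (blockLen j) <= 40 / INR (j^6).
Proof.
  intros Hj; pose proof (sizeA_ge j Hj) as HA; pose proof (sizeC_ge j Hj) as HC.
  set (A := sizeA j) in *; set (B := sizeB j); set (C := sizeC j) in *; set (D := sizeD j).
  assert (E : blockLen j = ((A-2) + 1 + B + 1 + (C-2) + 1 + D + 1)%nat)
    by (unfold blockLen; fold A B C D; lia).
  rewrite E, !sum_from_app.
  pose proof (eta_bounds j Hj) as Het; set (et := eta j) in *.
  assert (S1 : sum_from (defect (loc j)) 1 (A-2) <= 0).
  { eapply Rle_trans; [apply (sum_from_le _ _ _ 0) | lra].
    intros; rewrite defect_flat_A; auto; try lra; lia. }
  assert (S2 : forall m, (1 <= m)%nat -> sum_from (defect (loc j)) m 1 <= 3 * et).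
  { intros; simpl; rewrite Nat.add_0_r; pose proof (defect_corner j Hj m H); fold et in H0; lra. }
  assert (S3 : sum_from (defect (loc j)) (1 + (A - 2 + 1)) B <= INR B * (2 * et^2)).
  { apply sum_from_le; intros; apply defect_ramp_B; auto; fold A B; lia. }
  assert (S5 : sum_from (defect (loc j)) (1 + (A - 2 + 1 + B + 1)) (C - 2) <= 0).
  { eapply Rle_trans; [apply (sum_from_le _ _ _ 0) | lra].
    intros; rewrite defect_flat_C; auto; try lra; fold A B C; lia. }
  assert (S7 : sum_from (defect (loc j)) (1 + (A - 2 + 1 + B + 1 + (C - 2) + 1)) D
               <= INR D * (2 * et^2)).
  { apply sum_from_le; intros; apply defect_ramp_D; auto; fold A B C D; lia. }
  pose proof (S2 (1 + (A-2))%nat ltac:(lia)); pose proof (S2 (1 + (A - 2 + 1 + B))%nat ltac:(lia)).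
  pose proof (S2 (1 + (A - 2 + 1 + B + 1 + (C - 2)))%nat ltac:(lia)).
  pose proof (S2 (1 + (A - 2 + 1 + B + 1 + (C - 2) + 1 + D))%nat ltac:(lia)).
  pose proof (pow6_pos j Hj); pose proof (sizeB_succ j Hj); pose proof (sizeD_succ j Hj).
  fold B D in H4, H5; pose proof (pos_INR B); pose proof (pos_INR D).
  set (J6 := INR (j^6)) in *.
  assert (et*et <= 4/(J6*J6))
    by (replace (4/(J6*J6)) with ((2/J6)*(2/J6)) by (field; lra); apply Rmult_le_compat; lra).
  assert (INR B * (2*et^2) <= 8/J6).
  { replace (8/J6) with (J6 * (2*(4/(J6*J6)))) by (field; lra); simpl; rewrite Rmult_1_r.
    apply Rmult_le_compat; nra. }
  assert (INR D * (2*et^2) <= 8/J6).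
  { replace (8/J6) with (J6 * (2*(4/(J6*J6)))) by (field; lra); simpl; rewrite Rmult_1_r.
    apply Rmult_le_compat; nra. }
  assert (12 * et <= 24/J6) by (unfold Rdiv in *; lra).
  unfold Rdiv in *; lra.
Qed.

Lemma defect_ext a b n : a (n-1)%nat = b (n-1)%nat -> a n = b n -> a (S n) = b (S n) ->
  defect a n = defect b n.
Proof.
  intros; unfold defect, sq_incr; replace (S n - 1)%nat with n by lia.
  rewrite H, H0, H1; reflexivity.
Qed.

Lemma defect_shift a s n : (1 <= n)%nat -> defect (fun i => a (s + i)%nat) n = defect a (s + n).
Proof.
  intros; unfold defect, sq_incr.
  replace (s + (n - 1))%nat with (s + n - 1)%nat by lia.
  replace (S n - 1)%nat with n by lia; replace (S (s + n) - 1)%nat with (s + n)%nat by lia.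
  replace (s + S n)%nat with (S (s + n)) by lia; reflexivity.
Qed.

Lemma defect_a_ex_in_group k m : (1 <= m <= blockLen (S k))%nat ->
  defect a_ex (S (group_start k) + m) = defect (loc (S k)) m.
Proof.
  intros H; rewrite <- defect_shift by lia.
  apply defect_ext; cbv beta; rewrite !Nat.add_succ_l, a_ex_in_group; auto; lia.
Qed.

Lemma group_defect_a_ex k N : (N <= blockLen (S k))%nat ->
  sum_from (defect a_ex) (S (S (group_start k))) N <= 40 / INR ((S k)^6).
Proof.
  intros H; rewrite (sum_from_ext _ (defect (loc (S k))) _ 1).
  - eapply Rle_trans; [apply sum_from_mono; [intro; apply defect_nonneg | exact H] |].
    apply group_defect_sum; lia.
  - intros i Hi; replace (S (S (group_start k)) + i)%nat with (S (group_start k) + (1 + i))%nat by lia.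
    apply defect_a_ex_in_group; lia.
Qed.

(* Tails after group k: sum over j > k of 40/j^6 is at most 80/(k+1). *)
Lemma tail_after_group N : forall k, sum_from (defect a_ex) (S (S (group_start k))) N <= 80 / INR (S k).
Proof.
  induction N as [N IH] using (well_founded_induction Wf_nat.lt_wf); intros k.
  assert (HJ : 1 <= INR (S k)) by (rewrite S_INR; pose proof (pos_INR k); lra).
  set (y := INR (S k)) in *.
  assert (H6 : 40 / INR ((S k)^6) <= 40 / (y*y)).
  { rewrite pow_INR; fold y; apply Rmult_le_compat_l; [lra |]; apply Rinv_le_contravar; [nra |].
    simpl; assert (1 <= y*y) by nra; assert (1 <= y*y*y*y) by nra; nra. }
  assert (40/(y*y) <= 80/y) by (apply Rmult_le_reg_r with (y*y); [nra | field_simplify; nra]).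
  destruct (Nat.le_gt_cases N (blockLen (S k))).
  - eapply Rle_trans; [apply group_defect_a_ex; auto | lra].
  - replace N with (blockLen (S k) + (N - blockLen (S k)))%nat by lia; rewrite sum_from_app.
    pose proof (group_defect_a_ex k (blockLen (S k)) (le_n _)).
    replace (S (S (group_start k)) + blockLen (S k))%nat with (S (S (group_start (S k)))) by (simpl; lia).
    pose proof (blockLen_ge (S k) ltac:(lia)).
    pose proof (IH (N - blockLen (S k))%nat ltac:(lia) (S k)).
    assert (80 / INR (S (S k)) = 80 / (y+1)) by (rewrite S_INR; reflexivity).
    assert (40/(y*y) + 80/(y+1) <= 80/y)
      by (apply Rmult_le_reg_r with (y*y*(y+1)); [nra | field_simplify; nra]).
    lra.
Qed.

Lemma a_ex_small_tails : small_tails a_ex.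
Proof.
  intros tau Ht; destruct (archimed_cor1 (tau/80) ltac:(lra)) as [n [Hn Hn0]].
  exists (S (group_start (n-1))); intros N.
  eapply Rle_trans; [apply tail_after_group |].
  replace (S (n-1)) with n by lia; pose proof (lt_0_INR n Hn0).
  apply Rmult_le_reg_r with (/ 80); [lra |]; unfold Rdiv in *.
  replace (80 * / INR n * / 80) with (/ INR n) by (field; lra); lra.
Qed.

Theorem theorem5p3 :
  forall K : R -> Prop,
    compact K ->
    (forall x, K x -> -1 < x < 1) ->
    exists C : R,
      forall (x0 theta0 : R) (u : nat -> R),
        K x0 ->
        u 0%nat = cos theta0 ->
        u 1%nat = sin theta0 ->
        (forall n : nat, (1 <= n)%nat ->
           a_ex n * u (S n) - x0 * u n + a_ex (n - 1) * u (n - 1)%nat = 0) ->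
        forall n : nat, Rabs (u n) <= C.
Proof.
  intros K HK Hin.
  destruct (compact_in_unit_interval K HK Hin) as [rho [Hrho Hx]].
  destruct (uniform_boundedness a_ex rho Hrho eq_refl a_ex_bounds a_ex_small_tails) as [C HC].
  exists C; intros x0 theta0 u Kx H0 H1 Hsol.
  exact (HC x0 theta0 u (Hx x0 Kx) H0 H1 Hsol).
Qed.
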